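(* Let $\lambda,\beta,\epsilon>0$ and $\gamma>0$ with $0<\epsilon<\gamma^2\beta/4$, and let $\|\cdot\|_*$ be the norm defined in the context. (i) There exists $\eta_1>0$ such that for any fluid model $(y,x)$, at any regular point $t$ with $x(t)>-\lambda/\beta$, $\frac{d}{dt}\|(y(t),x(t))\|_*\le-\eta_1\|(y(t),x(t))\|_*$. (ii) There exists $\eta_2>0$ such that for any fluid model, at any regular point $t$ with $x(t)=-\lambda/\beta$ and $y(t)\ge\gamma\lambda/\epsilon$, $\frac{d}{dt}\|(y(t),x(t))\|_*\le-\eta_2$. (iii) There exist $\eta>0$ and $C>0$ such that for any fluid model, at any regular point $t$, $\|(y(t),x(t))\|_*\ge C$ implies $\frac{d}{dt}\|(y(t),x(t))\|_*\le-\eta$.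
   Context: Let $A=\begin{bmatrix}0&-\epsilon\\ \beta&-\gamma\beta\end{bmatrix}$; under $0<\epsilon<\gamma^2\beta/4$, $A$ has two distinct negative eigenvalues $-\nu_2<-\nu_1<0$. Let $v_i=(\beta/\nu_i,-1)$, $i=1,2$ (row vectors with $v_iA=-\nu_iv_i$). For $u\in\mathbb{R}^2$ write $u=\alpha_1v_1+\alpha_2v_2$ and set $\|u\|_*=(\alpha_1^2+\alpha_2^2)^{1/2}$. A fluid model is a locally Lipschitz continuous trajectory $(y(t),x(t))$, $t\ge0$, such that $x(t)\ge-\lambda/\beta$ for all $t$ and, at every regular point $t$: if $x(t)>-\lambda/\beta$ then $y'(t)=\beta x(t)$, $x'(t)=-\gamma\beta x(t)-\epsilon y(t)$; if $x(t)=-\lambda/\beta$ then $y'(t)=-\lambda$, $x'(t)=[\gamma\lambda-\epsilon y(t)]\vee0$. A point $t$ is regular if for every nonempty subset of $\{y,x\}$ the derivatives of the pointwise maximum and minimum over that subset exist at $t$. *)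

From Stdlib Require Import Reals Lra.
Open Scope R_scope.

(* Row vectors in R^2 are pairs (first, second) = (y, x). *)

(* The matrix A = [[0, -eps], [beta, -gamma*beta]] acting on row vectors from
   the right:  (a, b) A = (a*0 + b*beta, a*(-eps) + b*(-gamma*beta)). *)
Definition rowA (beta eps gamma : R) (w : R * R) : R * R :=
  (fst w * 0 + snd w * beta, fst w * (- eps) + snd w * (- (gamma * beta))).

Definition eigenvalueA (beta eps gamma mu : R) : Prop :=
  exists w : R * R, w <> (0, 0) /\
    rowA beta eps gamma w = (mu * fst w, mu * snd w).

Definition vvec (beta nu : R) : R * R := (beta / nu, -1).

(* Coordinates (alpha1, alpha2) of u in the basis (v1, v2), u = alpha1 v1 + alpha2 v2
   (Cramer's rule). *)
Definition coords (v1 v2 u : R * R) : R * R :=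
  let det := fst v1 * snd v2 - fst v2 * snd v1 in
  ((fst u * snd v2 - snd u * fst v2) / det,
   (fst v1 * snd u - snd v1 * fst u) / det).

Definition norm_star (beta nu1 nu2 : R) (u : R * R) : R :=
  let a := coords (vvec beta nu1) (vvec beta nu2) u in
  sqrt (fst a ^ 2 + snd a ^ 2).

(* f has derivative d at t >= 0, relative to the time domain [0, oo)
   (for t > 0 this is the ordinary two-sided derivative; at t = 0 the
   right derivative). *)
Definition has_deriv0 (f : R -> R) (t d : R) : Prop :=
  0 <= t /\
  forall e, 0 < e -> exists del, 0 < del /\
    forall h, h <> 0 -> 0 <= t + h -> Rabs h < del ->
      Rabs ((f (t + h) - f t) / h - d) < e.

Definition differentiable0 (f : R -> R) (t : R) : Prop :=
  exists d, has_deriv0 f t d.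

(* Regular point: for every nonempty subset of {y, x} the pointwise max and
   min are differentiable at t: subsets {y}, {x}, {y, x}. *)
Definition regular_point (y x : R -> R) (t : R) : Prop :=
  differentiable0 y t /\ differentiable0 x t /\
  differentiable0 (fun s => Rmax (y s) (x s)) t /\
  differentiable0 (fun s => Rmin (y s) (x s)) t.

Definition loc_lipschitz0 (f : R -> R) : Prop :=
  forall T, 0 <= T -> exists L, 0 <= L /\
    forall s t, 0 <= s <= T -> 0 <= t <= T -> Rabs (f s - f t) <= L * Rabs (s - t).

Definition fluid_model (lam beta eps gamma : R) (y x : R -> R) : Prop :=
  loc_lipschitz0 y /\ loc_lipschitz0 x /\
  (forall t, 0 <= t -> x t >= - lam / beta) /\
  (forall t, 0 <= t -> regular_point y x t ->
     (x t > - lam / beta ->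
        has_deriv0 y t (beta * x t) /\
        has_deriv0 x t (- gamma * beta * x t - eps * y t)) /\
     (x t = - lam / beta ->
        has_deriv0 y t (- lam) /\
        has_deriv0 x t (Rmax (gamma * lam - eps * y t) 0))).

(* In the coordinates [alpha] of the eigenbasis [v1, v2] of [A] the interior
   dynamics decouple into [alpha_i' = - nu_i alpha_i], so the Euclidean norm of
   [alpha] decays at rate at least [nu1].  On the boundary [x = - lam / beta]
   the velocity [(- lam, 0)] has coordinates [(- kappa, kappa)] with
   [kappa = lam / (beta / nu1 - beta / nu2) > 0], and once [y >= gamma lam / eps]
   the state satisfies [alpha_1 > 0 >= alpha_2]; then
   [<alpha, alpha'> = - kappa (|alpha_1| + |alpha_2|) <= - kappa |alpha|].
   Below that threshold the boundary velocity equals the interior vector field. *)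

From Stdlib Require Import Reals Lra Psatz.
From Coquelicot Require Import Coquelicot.
Open Scope R_scope.

Lemma has_deriv0_ext f g t d :
  (forall s, f s = g s) -> has_deriv0 f t d -> has_deriv0 g t d.
Proof.
  intros Efg [Ht Hf]; split; [exact Ht|].
  intros e He; destruct (Hf e He) as [del [Hdel Hh]].
  exists del; split; [exact Hdel|].
  intros h Hh0 Hth Hhdel; rewrite <- !Efg; auto.
Qed.

(* Extending [f] affinely to the left of [0] turns a one-sided derivative at
   [t = 0] into a two-sided one, so Coquelicot's calculus applies. *)
Lemma has_deriv0_is_derive f t d :
  has_deriv0 f t d <->
  0 <= t /\ exists g, is_derive g t d /\ forall s, 0 <= s -> g s = f s.
Proof.
  split.
  - intros [Ht Hf]; split; [exact Ht|].
    exists (fun s => if Rle_dec 0 s then f s else f t + d * (s - t)); split.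
    + apply is_derive_Reals; intros e He.
      destruct (Hf e He) as [del [Hdel Hh]].
      exists (mkposreal del Hdel); intros h Hh0 Hhdel; simpl in Hhdel.
      destruct (Rle_dec 0 t) as [_|]; [|lra].
      destruct (Rle_dec 0 (t + h)) as [Hth|]; [now apply Hh|].
      replace ((f t + d * (t + h - t) - f t) / h - d) with 0 by (field; exact Hh0).
      rewrite Rabs_R0; exact He.
    + intros s Hs; destruct (Rle_dec 0 s); [reflexivity|lra].
  - intros [Ht [g [Hg Egf]]]; split; [exact Ht|].
    intros e He; apply is_derive_Reals in Hg; destruct (Hg e He) as [del Hdel].
    exists del; split; [apply cond_pos|].
    intros h Hh0 Hth Hhdel; rewrite <- !Egf by assumption; auto.
Qed.

Lemma has_deriv0_lin f g p q t df dg :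
  has_deriv0 f t df -> has_deriv0 g t dg ->
  has_deriv0 (fun s => p * f s + q * g s) t (p * df + q * dg).
Proof.
  rewrite !has_deriv0_is_derive.
  intros [Ht [F [HF EF]]] [_ [G [HG EG]]]; split; [exact Ht|].
  exists (fun s => p * F s + q * G s); split.
  - apply (is_derive_plus (fun s => p * F s) (fun s => q * G s));
      apply is_derive_scal; assumption.
  - intros s Hs; rewrite EF, EG by exact Hs; reflexivity.
Qed.

Lemma has_deriv0_norm2 f g t df dg :
  has_deriv0 f t df -> has_deriv0 g t dg -> 0 < f t ^ 2 + g t ^ 2 ->
  has_deriv0 (fun s => sqrt (f s ^ 2 + g s ^ 2)) t
    ((f t * df + g t * dg) / sqrt (f t ^ 2 + g t ^ 2)).
Proof.
  rewrite !has_deriv0_is_derive.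
  intros [Ht [F [HF EF]]] [_ [G [HG EG]]] Hpos; split; [exact Ht|].
  rewrite <- (EF t Ht), <- (EG t Ht) in *.
  exists (fun s => sqrt (F s ^ 2 + G s ^ 2)); split.
  - assert (Hsq : is_derive (fun s => F s ^ 2 + G s ^ 2) t
                    (2 * (F t * df + G t * dg))).
    { eapply is_derive_ext; [intros s; reflexivity|].
      replace (2 * (F t * df + G t * dg))
        with (plus (INR 2 * df * F t ^ 1) (INR 2 * dg * G t ^ 1))
        by (unfold plus; simpl; ring).
      apply (is_derive_plus (fun s => F s ^ 2) (fun s => G s ^ 2));
        apply is_derive_pow; assumption. }
    replace ((F t * df + G t * dg) / sqrt (F t ^ 2 + G t ^ 2))
      with (2 * (F t * df + G t * dg) / (2 * sqrt (F t ^ 2 + G t ^ 2))).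
    + exact (is_derive_sqrt (fun s => F s ^ 2 + G s ^ 2) t _ Hsq Hpos).
    + field; apply Rgt_not_eq, sqrt_lt_R0; exact Hpos.
  - intros s Hs; rewrite EF, EG by exact Hs; reflexivity.
Qed.

Lemma sqrt_norm2_le_abs a b : sqrt (a ^ 2 + b ^ 2) <= Rabs a + Rabs b.
Proof.
  rewrite <- (sqrt_pow2 (Rabs a + Rabs b))
    by (pose proof (Rabs_pos a); pose proof (Rabs_pos b); lra).
  apply sqrt_le_1_alt.
  rewrite <- (pow2_abs a), <- (pow2_abs b).
  pose proof (Rabs_pos a); pose proof (Rabs_pos b); nra.
Qed.

Lemma has_deriv0_norm2_zero f g t :
  has_deriv0 f t 0 -> has_deriv0 g t 0 -> f t = 0 -> g t = 0 ->
  has_deriv0 (fun s => sqrt (f s ^ 2 + g s ^ 2)) t 0.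
Proof.
  intros [Ht Hf] [_ Hg] Hf0 Hg0; split; [exact Ht|].
  intros e He.
  destruct (Hf (e / 2)) as [d1 [Hd1 H1]]; [lra|].
  destruct (Hg (e / 2)) as [d2 [Hd2 H2]]; [lra|].
  exists (Rmin d1 d2); split; [now apply Rmin_pos|].
  intros h Hh0 Hth Hhd.
  pose proof (Rmin_l d1 d2); pose proof (Rmin_r d1 d2).
  specialize (H1 h Hh0 Hth ltac:(lra)); specialize (H2 h Hh0 Hth ltac:(lra)).
  rewrite Hf0 in H1; rewrite Hg0 in H2; rewrite Hf0, Hg0.
  replace ((f (t + h) - 0) / h - 0) with (f (t + h) / h) in H1 by (field; exact Hh0).
  replace ((g (t + h) - 0) / h - 0) with (g (t + h) / h) in H2 by (field; exact Hh0).
  replace ((sqrt (f (t + h) ^ 2 + g (t + h) ^ 2) - sqrt (0 ^ 2 + 0 ^ 2)) / h - 0)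
    with (sqrt (f (t + h) ^ 2 + g (t + h) ^ 2) / h)
    by (replace (0 ^ 2 + 0 ^ 2) with 0 by ring; rewrite sqrt_0; field; exact Hh0).
  unfold Rdiv in *; rewrite Rabs_mult in *.
  rewrite (Rabs_right (sqrt _)) by apply Rle_ge, sqrt_pos.
  pose proof (sqrt_norm2_le_abs (f (t + h)) (g (t + h))).
  pose proof (Rabs_pos (/ h)); nra.
Qed.


Lemma norm2_deriv_contracting f g k1 k2 t :
  0 <= k1 <= k2 ->
  has_deriv0 f t (- k1 * f t) -> has_deriv0 g t (- k2 * g t) ->
  exists D, has_deriv0 (fun s => sqrt (f s ^ 2 + g s ^ 2)) t D /\
    D <= - k1 * sqrt (f t ^ 2 + g t ^ 2).
Proof.
  intros Hk Hf Hg.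
  destruct (Rlt_or_le 0 (f t ^ 2 + g t ^ 2)) as [Hpos|Hzero].
  - eexists; split; [exact (has_deriv0_norm2 _ _ _ _ _ Hf Hg Hpos)|].
    pose proof (sqrt_lt_R0 _ Hpos) as HN.
    pose proof (sqrt_sqrt _ (Rlt_le _ _ Hpos)) as HNN.
    apply (Rmult_le_reg_r (sqrt (f t ^ 2 + g t ^ 2))); [exact HN|].
    unfold Rdiv; rewrite Rmult_assoc, Rinv_l by lra; nra.
  - assert (Hf0 : f t = 0) by nra; assert (Hg0 : g t = 0) by nra.
    rewrite Hf0, Rmult_0_r in Hf; rewrite Hg0, Rmult_0_r in Hg.
    exists 0; split; [now apply has_deriv0_norm2_zero|].
    rewrite Hf0, Hg0; replace (0 ^ 2 + 0 ^ 2) with 0 by ring.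
    rewrite sqrt_0; lra.
Qed.

(* Both terms of [f f' + g g'] are negative, and [f - g = |f| + |g|] dominates
   the norm. *)
Lemma norm2_deriv_sliding f g k t :
  0 < k -> has_deriv0 f t (- k) -> has_deriv0 g t k -> 0 < f t -> g t <= 0 ->
  exists D, has_deriv0 (fun s => sqrt (f s ^ 2 + g s ^ 2)) t D /\ D <= - k.
Proof.
  intros Hk Hf Hg Hf0 Hg0.
  assert (Hpos : 0 < f t ^ 2 + g t ^ 2) by nra.
  eexists; split; [exact (has_deriv0_norm2 _ _ _ _ _ Hf Hg Hpos)|].
  pose proof (sqrt_lt_R0 _ Hpos) as HN.
  pose proof (sqrt_norm2_le_abs (f t) (g t)) as Hle.
  rewrite Rabs_right, Rabs_left1 in Hle by lra.
  apply (Rmult_le_reg_r (sqrt (f t ^ 2 + g t ^ 2))); [exact HN|].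
  unfold Rdiv; rewrite Rmult_assoc, Rinv_l by lra; nra.
Qed.

Lemma has_deriv0_coords v1 v2 y x t dy dx :
  has_deriv0 y t dy -> has_deriv0 x t dx ->
  has_deriv0 (fun s => fst (coords v1 v2 (y s, x s))) t (fst (coords v1 v2 (dy, dx))) /\
  has_deriv0 (fun s => snd (coords v1 v2 (y s, x s))) t (snd (coords v1 v2 (dy, dx))).
Proof.
  intros Hy Hx; unfold coords; simpl.
  set (det := fst v1 * snd v2 - fst v2 * snd v1).
  split.
  - replace ((dy * snd v2 - dx * fst v2) / det)
      with (snd v2 / det * dy + - (fst v2 / det) * dx) by (unfold Rdiv; ring).
    apply (has_deriv0_ext (fun s => snd v2 / det * y s + - (fst v2 / det) * x s));
      [intros s; unfold Rdiv; ring|now apply has_deriv0_lin].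
  - replace ((fst v1 * dx - snd v1 * dy) / det)
      with (- (snd v1 / det) * dy + fst v1 / det * dx) by (unfold Rdiv; ring).
    apply (has_deriv0_ext (fun s => - (snd v1 / det) * y s + fst v1 / det * x s));
      [intros s; unfold Rdiv; ring|now apply has_deriv0_lin].
Qed.


Lemma eigenvalueA_char_poly beta eps gamma nu :
  0 < beta -> eigenvalueA beta eps gamma (- nu) ->
  nu ^ 2 - gamma * beta * nu + eps * beta = 0.
Proof.
  intros Hbeta [[w1 w2] [Hw Heq]]; unfold rowA in Heq; simpl in Heq.
  injection Heq as E1 E2.
  assert (Hw1 : w1 <> 0).
  { intros Hw1; subst w1; apply Hw; f_equal; nra. }
  assert (Hprod : w1 * (nu ^ 2 - gamma * beta * nu + eps * beta) = 0).
  { replace (w1 * (nu ^ 2 - gamma * beta * nu + eps * beta))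
      with (- beta * (w1 * - eps + w2 * - (gamma * beta) - - nu * w2)
            + (nu - gamma * beta) * (w1 * 0 + w2 * beta - - nu * w1)) by ring.
    rewrite E1, E2; ring. }
  apply Rmult_integral in Hprod; tauto.
Qed.

Lemma quadratic_vieta s p r1 r2 :
  r1 <> r2 -> r1 ^ 2 - s * r1 + p = 0 -> r2 ^ 2 - s * r2 + p = 0 ->
  s = r1 + r2 /\ p = r1 * r2.
Proof.
  intros Hr H1 H2.
  assert (Hs : (r1 - r2) * (r1 + r2 - s) = 0) by nra.
  apply Rmult_integral in Hs; destruct Hs as [Hs|Hs]; [lra|split; nra].
Qed.

Lemma Rdiv_lt_contravar_pos c a b : 0 < c -> 0 < a < b -> c / b < c / a.
Proof.
  intros Hc Hab; apply Rmult_lt_compat_l; [exact Hc|].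
  apply Rinv_lt_contravar; nra.
Qed.

Section FluidNorm.

Variables lam beta eps gamma nu1 nu2 : R.
Hypothesis Hlam : 0 < lam.
Hypothesis Hbeta : 0 < beta.
Hypothesis Hnu1 : 0 < nu1.
Hypothesis Hnu12 : nu1 < nu2.
Hypothesis Hsum : gamma * beta = nu1 + nu2.
Hypothesis Hprod : eps * beta = nu1 * nu2.

Local Notation alpha := (coords (vvec beta nu1) (vvec beta nu2)).
Local Notation N u := (norm_star beta nu1 nu2 u).

Let basis_gap := beta / nu1 - beta / nu2.

Lemma basis_gap_pos : 0 < basis_gap.
Proof.
  unfold basis_gap; pose proof (Rdiv_lt_contravar_pos beta nu1 nu2); lra.
Qed.

Let slide_rate := lam / basis_gap.

Lemma slide_rate_pos : 0 < slide_rate.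
Proof. exact (Rdiv_lt_0_compat _ _ Hlam basis_gap_pos). Qed.

(* [v1, v2] diagonalise [A], so the drift acts coordinatewise. *)
Lemma coords_drift y x :
  alpha (beta * x, - gamma * beta * x - eps * y) =
  (- nu1 * fst (alpha (y, x)), - nu2 * snd (alpha (y, x))).
Proof.
  pose proof basis_gap_pos.
  assert (Heps : eps = nu1 * nu2 / beta).
  { apply (Rmult_eq_reg_r beta); [rewrite Hprod; field|]; lra. }
  replace (- gamma * beta * x) with (- (nu1 + nu2) * x) by (rewrite <- Hsum; ring).
  unfold coords, vvec, basis_gap in *; simpl; subst eps.
  f_equal; field; repeat split; try lra; nra.
Qed.

Lemma coords_boundary y :
  alpha (y, - lam / beta) = ((y - lam / nu2) / basis_gap, (lam / nu1 - y) / basis_gap).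
Proof.
  pose proof basis_gap_pos.
  unfold coords, vvec, basis_gap in *; simpl.
  f_equal; field; repeat split; try lra; nra.
Qed.

Lemma coords_boundary_velocity : alpha (- lam, 0) = (- slide_rate, slide_rate).
Proof.
  pose proof basis_gap_pos.
  unfold slide_rate, coords, vvec, basis_gap in *; simpl.
  f_equal; field; repeat split; try lra; nra.
Qed.

Lemma norm_star_deriv_drift y x t :
  has_deriv0 y t (beta * x t) -> has_deriv0 x t (- gamma * beta * x t - eps * y t) ->
  exists D, has_deriv0 (fun s => N (y s, x s)) t D /\ D <= - nu1 * N (y t, x t).
Proof.
  intros Hy Hx; destruct (has_deriv0_coords (vvec beta nu1) (vvec beta nu2) _ _ _ _ _ Hy Hx)
    as [H1 H2].
  rewrite coords_drift in H1, H2; cbn [fst snd] in H1, H2.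
  exact (norm2_deriv_contracting _ _ nu1 nu2 t ltac:(lra) H1 H2).
Qed.

Lemma norm_star_deriv_boundary y x t :
  has_deriv0 y t (- lam) -> has_deriv0 x t 0 -> x t = - lam / beta -> y t >= lam / nu1 ->
  exists D, has_deriv0 (fun s => N (y s, x s)) t D /\ D <= - slide_rate.
Proof.
  intros Hy Hx Hxt Hyt.
  destruct (has_deriv0_coords (vvec beta nu1) (vvec beta nu2) _ _ _ _ _ Hy Hx) as [H1 H2].
  rewrite coords_boundary_velocity in H1, H2; cbn [fst snd] in H1, H2.
  pose proof basis_gap_pos; pose proof (Rdiv_lt_contravar_pos lam nu1 nu2).
  pose proof (Rinv_0_lt_compat _ basis_gap_pos).
  refine (norm2_deriv_sliding _ _ _ _ slide_rate_pos H1 H2 _ _);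
    rewrite Hxt, coords_boundary; cbn [fst snd]; unfold Rdiv at 1; nra.
Qed.

Lemma eps_pos : 0 < eps.
Proof. nra. Qed.

Lemma threshold_ge : lam / nu1 <= gamma * lam / eps.
Proof.
  pose proof eps_pos.
  assert (Hthr : gamma * lam / eps = lam / nu1 + lam / nu2).
  { replace gamma with ((nu1 + nu2) / beta)
      by (apply (Rmult_eq_reg_r beta); [rewrite Hsum; field|]; lra).
    replace eps with (nu1 * nu2 / beta)
      by (apply (Rmult_eq_reg_r beta); [rewrite Hprod; field|]; lra).
    field; repeat split; lra. }
  pose proof (Rdiv_lt_0_compat lam nu2 Hlam ltac:(lra)); lra.
Qed.

Section Fluid.

Variables (y x : R -> R) (t : R).
Hypothesis Hfluid : fluid_model lam beta eps gamma y x.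
Hypothesis Ht : 0 <= t.
Hypothesis Hreg : regular_point y x t.

(* Below the threshold the reflection at [x = -lam/beta] is inactive. *)
Lemma fluid_model_drift :
  x t > - lam / beta \/ (x t = - lam / beta /\ y t <= gamma * lam / eps) ->
  has_deriv0 y t (beta * x t) /\ has_deriv0 x t (- gamma * beta * x t - eps * y t).
Proof.
  destruct Hfluid as [_ [_ [_ Hdyn]]]; destruct (Hdyn t Ht Hreg) as [Hint Hbd].
  intros [Hx|[Hx Hy]]; [exact (Hint Hx)|].
  destruct (Hbd Hx) as [Dy Dx]; pose proof eps_pos.
  assert (Hlow : eps * y t <= gamma * lam).
  { apply (Rmult_le_compat_l eps) in Hy; [|lra].
    replace (eps * (gamma * lam / eps)) with (gamma * lam) in Hy by (field; lra); exact Hy. }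
  rewrite Rmax_left in Dx by lra.
  replace (beta * x t) with (- lam) by (rewrite Hx; field; lra).
  replace (- gamma * beta * x t - eps * y t) with (gamma * lam - eps * y t)
    by (rewrite Hx; field; lra).
  split; assumption.
Qed.

Lemma fluid_model_slide :
  x t = - lam / beta -> y t >= gamma * lam / eps ->
  has_deriv0 y t (- lam) /\ has_deriv0 x t 0.
Proof.
  destruct Hfluid as [_ [_ [_ Hdyn]]]; destruct (Hdyn t Ht Hreg) as [_ Hbd].
  intros Hx Hy; destruct (Hbd Hx) as [Dy Dx]; pose proof eps_pos.
  assert (Hhigh : gamma * lam <= eps * y t).
  { apply Rge_le, (Rmult_le_compat_l eps) in Hy; [|lra].
    replace (eps * (gamma * lam / eps)) with (gamma * lam) in Hy by (field; lra); exact Hy. }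
  rewrite Rmax_right in Dx by lra.
  split; assumption.
Qed.

Lemma norm_star_decay_drift :
  x t > - lam / beta \/ (x t = - lam / beta /\ y t <= gamma * lam / eps) ->
  exists D, has_deriv0 (fun s => N (y s, x s)) t D /\ D <= - nu1 * N (y t, x t).
Proof.
  intros Hxy; destruct (fluid_model_drift Hxy) as [Dy Dx].
  exact (norm_star_deriv_drift _ _ _ Dy Dx).
Qed.

Lemma norm_star_decay_slide :
  x t = - lam / beta -> y t >= gamma * lam / eps ->
  exists D, has_deriv0 (fun s => N (y s, x s)) t D /\ D <= - slide_rate.
Proof.
  intros Hx Hy; destruct (fluid_model_slide Hx Hy) as [Dy Dx].
  pose proof threshold_ge.
  exact (norm_star_deriv_boundary _ _ _ Dy Dx Hx ltac:(lra)).
Qed.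

Lemma norm_star_decay_large C :
  0 < C -> N (y t, x t) >= C ->
  exists D, has_deriv0 (fun s => N (y s, x s)) t D /\ D <= - Rmin (nu1 * C) slide_rate.
Proof.
  intros HC HN; pose proof (Rmin_l (nu1 * C) slide_rate).
  pose proof (Rmin_r (nu1 * C) slide_rate).
  destruct Hfluid as [_ [_ [Hstate _]]].
  destruct (Rge_gt_or_eq _ _ (Hstate t Ht)) as [Hx|Hx];
    [|destruct (Rle_lt_dec (gamma * lam / eps) (y t)) as [Hy|Hy]].
  - destruct (norm_star_decay_drift (or_introl Hx)) as [D [HD HDle]].
    exists D; split; [exact HD|nra].
  - destruct (norm_star_decay_slide Hx (Rle_ge _ _ Hy)) as [D [HD HDle]].
    exists D; split; [exact HD|lra].
  - destruct (norm_star_decay_drift (or_intror (conj Hx (Rlt_le _ _ Hy)))) as [D [HD HDle]].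
    exists D; split; [exact HD|nra].
Qed.

End Fluid.

End FluidNorm.


Theorem lemma2 (lam beta eps gamma nu1 nu2 : R) :
  0 < lam -> 0 < beta -> 0 < eps -> 0 < gamma ->
  eps < gamma ^ 2 * beta / 4 ->
  0 < nu1 -> nu1 < nu2 ->
  eigenvalueA beta eps gamma (- nu1) ->
  eigenvalueA beta eps gamma (- nu2) ->
  (* (i) *)
  (exists eta1, 0 < eta1 /\
     forall y x : R -> R, fluid_model lam beta eps gamma y x ->
     forall t, 0 <= t -> regular_point y x t -> x t > - lam / beta ->
     exists D, has_deriv0 (fun s => norm_star beta nu1 nu2 (y s, x s)) t D /\
       D <= - eta1 * norm_star beta nu1 nu2 (y t, x t)) /\
  (* (ii) *)
  (exists eta2, 0 < eta2 /\
     forall y x : R -> R, fluid_model lam beta eps gamma y x ->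
     forall t, 0 <= t -> regular_point y x t -> x t = - lam / beta ->
     y t >= gamma * lam / eps ->
     exists D, has_deriv0 (fun s => norm_star beta nu1 nu2 (y s, x s)) t D /\
       D <= - eta2) /\
  (* (iii) *)
  (exists eta C, 0 < eta /\ 0 < C /\
     forall y x : R -> R, fluid_model lam beta eps gamma y x ->
     forall t, 0 <= t -> regular_point y x t ->
     norm_star beta nu1 nu2 (y t, x t) >= C ->
     exists D, has_deriv0 (fun s => norm_star beta nu1 nu2 (y s, x s)) t D /\
       D <= - eta).
Proof.
  intros Hlam Hbeta _ _ _ Hnu1 Hnu12 Hev1 Hev2.
  destruct (quadratic_vieta (gamma * beta) (eps * beta) nu1 nu2 ltac:(lra)
              (eigenvalueA_char_poly _ _ _ _ Hbeta Hev1)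
              (eigenvalueA_char_poly _ _ _ _ Hbeta Hev2)) as [Hsum Hprod].
  pose proof (slide_rate_pos lam beta nu1 nu2 Hlam Hbeta Hnu1 Hnu12) as Hslide.
  split; [|split].
  - exists nu1; split; [exact Hnu1|].
    intros y x Hfluid t Ht Hreg Hx.
    now apply (norm_star_decay_drift lam beta eps gamma); [..|left].
  - eexists; split; [exact Hslide|].
    intros y x Hfluid t Ht Hreg.
    now apply (norm_star_decay_slide lam beta eps gamma).
  - exists (Rmin (nu1 * 1) (lam / (beta / nu1 - beta / nu2))), 1.
    split; [apply Rmin_pos; lra|split; [lra|]].
    intros y x Hfluid t Ht Hreg.
    apply (norm_star_decay_large lam beta eps gamma); auto; lra.
Qed.
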